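(* Let $\omega\in S_n$. If $M_\omega$ contains a $C_4$-parallelogram-pattern poset, then $M_\omega$ contains a parallelogram-pattern poset.
   Context: Permutations $\omega\in S_n$ are written in one-line notation. Let ${\rm Inv}(\omega)=\{(i,j): 1\le i<j\le n,\ \omega(i)>\omega(j)\}$, $c_i(\omega)=\#\{j: i<j\le n,\ \omega(i)>\omega(j)\}$, and for $i<j$, $c_{i,j}(\omega)=\#\{k: i<k<j,\ \omega(i)>\omega(k)\}$; $[m]=\{1,\dots,m\}$. For $i$ with $c_i(\omega)>0$ and $x\in[c_i(\omega)]$, $m_{i,x}(\omega)\in\mathbb{N}^n$ has $j$-th coordinate $0$ if $j<i$; $x$ if $j=i$; $0$ if $j>i$ and $(i,j)\in{\rm Inv}(\omega)$; $\max\{0,x-c_{i,j}(\omega)\}$ if $j>i$ and $(i,j)\notin{\rm Inv}(\omega)$. $M_\omega$ is the set of all such $m_{i,x}(\omega)$, ordered by the product order on $\mathbb{N}^n$. For $1\le i<j\le n$, $b<a$ in $[c_i(\omega)]$ and $c<d$ in $[c_j(\omega)]$ with $a+c=b+d$, the set $\{m_{i,a}(\omega),m_{i,b}(\omega),m_{j,c}(\omega),m_{j,d}(\omega)\}$ is a parallelogram-pattern poset if $m_{i,a}(\omega)>m_{j,d}(\omega)$, $m_{i,b}(\omega)>m_{j,c}(\omega)$, and $m_{i,b}(\omega)$, $m_{j,d}(\omega)$ are incomparable; it is a $C_4$-parallelogram-pattern poset if $m_{i,a}(\omega)>m_{j,d}(\omega)$, $m_{i,b}(\omega)>m_{j,c}(\omega)$,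 and $m_{i,b}(\omega)$, $m_{j,d}(\omega)$ are comparable. *)

(* Positions 1..n of the paper are the ordinals 'I_n (0-based). *)
From mathcomp Require Import all_boot all_fingroup.
Set Implicit Arguments. Unset Strict Implicit. Unset Printing Implicit Defensive.

Definition invb n (w : 'S_n) (i j : 'I_n) : bool := (i < j) && (w j < w i).

Definition cw n (w : 'S_n) (i : 'I_n) : nat := #|[set j : 'I_n | invb w i j]|.

Definition cij n (w : 'S_n) (i j : 'I_n) : nat :=
  #|[set k : 'I_n | (i < k) && (k < j) && (w k < w i)]|.

(* m_{i,x}(w) in N^n; truncated subtraction x - c_{i,j} = max{0, x - c_{i,j}} *)
Definition mvec n (w : 'S_n) (i : 'I_n) (x : nat) : {ffun 'I_n -> nat} :=
  [ffun j : 'I_n =>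
     if j < i then 0
     else if j == i then x
     else if invb w i j then 0
     else x - cij w i j].

Definition vle n (u v : {ffun 'I_n -> nat}) : bool := [forall k, u k <= v k].
Definition vlt n (u v : {ffun 'I_n -> nat}) : bool := (u != v) && vle u v.
Definition vcomparable n (u v : {ffun 'I_n -> nat}) : bool := vle u v || vle v u.

Definition pattern_data n (w : 'S_n) (i j : 'I_n) (a b c d : nat) : Prop :=
  [/\ i < j,
      1 <= b /\ b < a /\ a <= cw w i,
      1 <= c /\ c < d /\ d <= cw w j,
      a + c = b + d
    & vlt (mvec w j d) (mvec w i a) /\ vlt (mvec w j c) (mvec w i b)].

Definition has_parallelogram_pattern n (w : 'S_n) : Prop :=
  exists (i j : 'I_n) (a b c d : nat),
    pattern_data w i j a b c d /\ ~~ vcomparable (mvec w i b) (mvec w j d).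

Definition has_C4_parallelogram_pattern n (w : 'S_n) : Prop :=
  exists (i j : 'I_n) (a b c d : nat),
    pattern_data w i j a b c d /\ vcomparable (mvec w i b) (mvec w j d).

From mathcomp Require Import all_boot all_fingroup.
From mathcomp Require Import zify.

Set Implicit Arguments.
Unset Strict Implicit.

(* Let {m_{i,a}, m_{i,b}, m_{j,c}, m_{j,d}} be a C4-parallelogram
   pattern, with i < j.  The vector m_{i,b} has the positive entry b at i while
   m_{j,d} vanishes there, so comparability forces m_{j,d} <= m_{i,b}.  Reading
   this at coordinate j shows that (i,j) is not an inversion and d + c_{i,j} <= b;
   hence c_i >= a > b >= c_{i,j} + 2, and also c_j >= d >= 2.
   Conversely, whenever (i,j) is a non-inversion with c_i >= c_{i,j} + 2 and
   c_j >= 2, the four vectors m_{i,C+2}, m_{i,C+1}, m_{j,1}, m_{j,2}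
   (C = c_{i,j}) form a parallelogram pattern: a general shift lemma gives
   m_{j,y} <= m_{i,x} as soon as y + C <= x, and coordinates i and j witness
   that m_{i,C+1} and m_{j,2} are incomparable. *)

Section Vectors.

Variables (n : nat) (w : 'S_n).

Lemma mvec_before (i k : 'I_n) x : k < i -> mvec w i x k = 0.
Proof. by move=> lt_ki; rewrite /mvec ffunE lt_ki. Qed.

Lemma mvec_self (i : 'I_n) x : mvec w i x i = x.
Proof. by rewrite /mvec ffunE ltnn eqxx. Qed.

Lemma mvec_after (i k : 'I_n) x : i < k ->
  mvec w i x k = if w k < w i then 0 else x - cij w i k.
Proof.
move=> lt_ik; rewrite /mvec ffunE ltnNge (ltnW lt_ik) /= ifN_eq.
  by rewrite /invb lt_ik.
by rewrite neq_ltn lt_ik orbT.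
Qed.

Lemma perm_leq_ltn (k l : 'I_n) : k < l -> (w k <= w l) = (w k < w l).
Proof.
move=> lt_kl; rewrite leq_eqVlt (_ : (w k == w l :> nat) = false) //.
by apply: contraTF lt_kl => /eqP /val_inj /perm_inj ->; rewrite ltnn.
Qed.

(* Subadditivity of c_{i,.} across a non-inversion (i,j): the entries below
   w(i) between i and k lie either before j, or after j and then below w(j). *)
Lemma cij_split (i j k : 'I_n) : i < j -> w i < w j ->
  cij w i k <= cij w i j + cij w j k.
Proof.
move=> lt_ij lt_wij; rewrite /cij; apply: leq_trans (leq_card_setU _ _).
apply: subset_leq_card; apply/subsetP => l; rewrite !inE.
case/andP => /andP [lt_il lt_lk] lt_wli.
case: (ltngtP l j) => [lt_lj | lt_jl | eq_lj].
- by rewrite lt_il lt_wli.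
- by rewrite lt_lk (ltn_trans lt_wli lt_wij) orbT.
- by move: lt_wli; rewrite (val_inj eq_lj) ltnNge (ltnW lt_wij).
Qed.

Lemma mvec_le_shift (i j : 'I_n) x y : i < j -> w i < w j ->
  y + cij w i j <= x -> vle (mvec w j y) (mvec w i x).
Proof.
move=> lt_ij lt_wij le_yx; apply/forallP => k.
case: (ltngtP k j) => [lt_kj | lt_jk | /val_inj ->].
- by rewrite mvec_before.
- have lt_ik := ltn_trans lt_ij lt_jk.
  rewrite (mvec_after _ lt_jk) (mvec_after _ lt_ik).
  case: ifP => // /negbT; rewrite -leqNgt => le_wjk.
  have lt_wjk : w j < w k by rewrite -(perm_leq_ltn lt_jk).
  rewrite ltnNge (ltnW (ltn_trans lt_wij lt_wjk)) /=.
  have := cij_split k lt_ij lt_wij; lia.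
- by rewrite mvec_self (mvec_after _ lt_ij) ltnNge (ltnW lt_wij) /=; lia.
Qed.

Lemma mvec_not_le_later (i j : 'I_n) x y : i < j -> 0 < x ->
  ~~ vle (mvec w i x) (mvec w j y).
Proof.
move=> lt_ij x_gt0; apply/negP => /forallP /(_ i).
by rewrite mvec_self mvec_before //; lia.
Qed.

Lemma mvec_neq_later (i j : 'I_n) x y : i < j -> 0 < x ->
  mvec w j y != mvec w i x.
Proof.
move=> lt_ij x_gt0; apply: contraNneq (mvec_not_le_later y lt_ij x_gt0) => ->.
by apply/forallP.
Qed.

Lemma mvec_le_at_later (i j : 'I_n) b d : i < j -> 0 < d ->
  vle (mvec w j d) (mvec w i b) -> w i < w j /\ d + cij w i j <= b.
Proof.
move=> lt_ij d_gt0 /forallP /(_ j); rewrite mvec_self (mvec_after _ lt_ij).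
case: ifP => [_ | /negbT]; first lia.
rewrite -leqNgt => le_wij le_db; split; last lia.
by rewrite -(perm_leq_ltn lt_ij).
Qed.

Lemma parallelogram_of_noninversion (i j : 'I_n) :
  i < j -> w i < w j -> (cij w i j).+2 <= cw w i -> 2 <= cw w j ->
  has_parallelogram_pattern w.
Proof.
move=> lt_ij lt_wij ci_big cj_big; set C := cij w i j.
have lower (x y : nat) : 0 < x -> y + C <= x -> vlt (mvec w j y) (mvec w i x).
  by move=> x_gt0 le_yx; rewrite /vlt mvec_neq_later // mvec_le_shift.
exists i, j, C.+2, C.+1, 1, 2; split.
  by split=> //; first (by lia); split; apply: lower; lia.
rewrite /vcomparable negb_or mvec_not_le_later //=.
apply/negP => /forallP /(_ j); rewrite mvec_self (mvec_after _ lt_ij).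
by rewrite [w j < w i]ltnNge (ltnW lt_wij) /= subSnn.
Qed.

End Vectors.

Theorem mainTheorem6 (n : nat) (w : 'S_n) :
  has_C4_parallelogram_pattern w -> has_parallelogram_pattern w.
Proof.
case=> i [j [a [b [c [d [[lt_ij [b_gt0 [lt_ba le_a]] [c_gt0 [lt_cd le_d]] _ _]]]]]]].
have d_gt0 : 0 < d by lia.
case/orP => [/negP | le_db]; first by move/negP: (mvec_not_le_later w d lt_ij b_gt0).
have [lt_wij le_b] := mvec_le_at_later lt_ij d_gt0 le_db.
by apply: (parallelogram_of_noninversion lt_ij lt_wij); lia.
Qed.
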